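(* Let $a,b,c,d,P_{\max}>0$ and set $\beta=b(1+dP_{\max})$. Consider the frontier curve $\Phi_1$, given as the graph of $$h(r_2)=\log_2\!\left(1+\frac{aP_{\max}}{1+\frac{b}{c}(1+dP_{\max})(2^{r_2}-1)}\right),\qquad r_2\ge0,$$ which expresses $r_1$ as a function of $r_2$. Let $P_2=\frac1c(1+dP_{\max})(2^{r_2}-1)$ be the corresponding power of user 2. Then $$\operatorname{sign}\big(h''(r_2)\big)=\operatorname{sign}(P_2-Q_2),$$ where $$Q_2=\frac{\Re\!\left(\sqrt{(c-\beta)(c-\beta+acP_{\max})}\right)-\beta}{cb}.$$ In particular, $\Phi_1$ restricted to $P_2\in[0,P_{\max}]$ is convex if $Q_2\le0$ and concave if $Q_2\ge P_{\max}$. If $0<Q_2<P_{\max}$, it has a non-stationary inflection point at $P_2=Q_2$.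
   Context: The channel power gains are normalized by the noise variance: $a$ (direct gain of user 1), $b$ (interference gain from transmitter 2 at receiver 1), $c$ (direct gain of user 2), $d$ (interference gain from transmitter 1 at receiver 2). The rates are $R_1(P_1,P_2)=\log_2\!\left(1+\frac{aP_1}{1+bP_2}\right)$ and $R_2(P_1,P_2)=\log_2\!\left(1+\frac{cP_2}{1+dP_1}\right)$. The curve $\Phi_1$ is the set of rate pairs obtained with $P_1=P_{\max}$ and $P_2$ ranging over $[0,P_{\max}]$. $\Re$ denotes the real part. *)

From Stdlib Require Import Reals Lra.
Open Scope R_scope.

Definition log2 (x : R) : R := ln x / ln 2.

Definition sgn (x : R) : R :=
  if Rlt_dec 0 x then 1 else if Rlt_dec x 0 then -1 else 0.

(* Real part of the principal complex square root of a real number x: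
   sqrt x if x >= 0, and 0 if x < 0 (the root is then purely imaginary). *)
Definition re_sqrt (x : R) : R := if Rle_dec 0 x then sqrt x else 0.

Definition hPhi1 (a b c d Pmax r2 : R) : R :=
  log2 (1 + a * Pmax / (1 + b / c * (1 + d * Pmax) * (Rpower 2 r2 - 1))).

Definition P2_of (c d Pmax r2 : R) : R := / c * (1 + d * Pmax) * (Rpower 2 r2 - 1).

Definition beta_of (b d Pmax : R) : R := b * (1 + d * Pmax).

Definition Q2_of (a b c d Pmax : R) : R :=
  let beta := beta_of b d Pmax in
  (re_sqrt ((c - beta) * (c - beta + a * c * Pmax)) - beta) / (c * b).

(* the rate r2 at which P2 = Pmax, i.e. the end of Phi_1 *)
Definition r2max (c d Pmax : R) : R := log2 (1 + c * Pmax / (1 + d * Pmax)).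

Definition convex_on (f : R -> R) (lo hi : R) : Prop :=
  forall x y t, lo <= x <= hi -> lo <= y <= hi -> 0 <= t <= 1 ->
    f (t * x + (1 - t) * y) <= t * f x + (1 - t) * f y.

Definition concave_on (f : R -> R) (lo hi : R) : Prop :=
  forall x y t, lo <= x <= hi -> lo <= y <= hi -> 0 <= t <= 1 ->
    t * f x + (1 - t) * f y <= f (t * x + (1 - t) * y).

From Stdlib Require Import Reals Lra.
From Coquelicot Require Import Coquelicot.
Open Scope R_scope.

(* Write E = 2^r2, kappa = b/c (1 + d Pmax) = beta/c and
   Y = 1 + kappa (E - 1) = 1 + b P2.  Then h = log2 (1 + a Pmax / Y), and a
   direct computation gives
     h'  = - a Pmax kappa E / (Y (Y + a Pmax)),
     h'' = a Pmax ln2 kappa E (Y^2 + 2 (kappa-1) Y + (kappa-1) a Pmax)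
           / (Y (Y + a Pmax))^2.
   Completing the square in c Y = beta E + (c - beta) turns the last factor
   into ((beta E)^2 - D) / c^2 with D = (c-beta)(c-beta+a c Pmax), while
   P2 - Q2 = (beta E - Re sqrt D) / (c b); since beta E > 0, both have the
   same sign.  As P2 is strictly increasing in r2, the sign of h'' changes
   at most once, at P2 = Q2, and the convexity statements follow from the
   classical "nonnegative second derivative implies convexity" argument. *)

Lemma sgn_cases (x : R) :
  (0 < x /\ sgn x = 1) \/ (x = 0 /\ sgn x = 0) \/ (x < 0 /\ sgn x = -1).
Proof.
  unfold sgn; destruct (Rlt_dec 0 x); [left; lra|].
  destruct (Rlt_dec x 0); right; [right|left]; lra.
Qed.

Lemma sgn_eq_iff (w z : R) :
  sgn w = sgn z -> (0 < w <-> 0 < z) /\ (w < 0 <-> z < 0).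
Proof.
  intros E; destruct (sgn_cases w) as [Hw|[Hw|Hw]];
    destruct (sgn_cases z) as [Hz|[Hz|Hz]]; lra.
Qed.

Lemma sgn_mul_pos (p z : R) : 0 < p -> sgn (p * z) = sgn z.
Proof.
  intros Hp; destruct (sgn_cases z) as [[Hz Sz]|[[Hz Sz]|[Hz Sz]]];
    rewrite Sz; destruct (sgn_cases (p * z)) as [H|[H|H]]; nra.
Qed.

Lemma sgn_sq_sub_re_sqrt (t D : R) :
  0 < t -> sgn (t ^ 2 - D) = sgn (t - re_sqrt D).
Proof.
  intros Ht; unfold re_sqrt; destruct (Rle_dec 0 D) as [HD|HD].
  - pose proof (sqrt_sqrt D HD); pose proof (sqrt_pos D).
    replace (t ^ 2 - D) with ((t + sqrt D) * (t - sqrt D)) by nra.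
    apply sgn_mul_pos; lra.
  - destruct (sgn_cases (t ^ 2 - D)) as [H|[H|H]];
      destruct (sgn_cases (t - 0)) as [H'|[H'|H']]; nra.
Qed.

Lemma ln2_pos : 0 < ln 2.
Proof. rewrite <- ln_1; apply ln_increasing; lra. Qed.

Lemma Rpower2_log2 (z : R) : 0 < z -> Rpower 2 (log2 z) = z.
Proof.
  intros Hz; pose proof ln2_pos; unfold Rpower, log2.
  replace (ln z / ln 2 * ln 2) with (ln z) by (field; lra).
  now apply exp_ln.
Qed.

Section Convexity.
Variables (f f1 f2 : R -> R) (lo hi : R).
Hypothesis f_deriv : forall r, lo <= r <= hi ->
  derivable_pt_lim f r (f1 r) /\ derivable_pt_lim f1 r (f2 r).

Lemma deriv_nondecreasing :
  (forall r, lo <= r <= hi -> 0 <= f2 r) ->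
  forall x y, lo <= x -> x < y -> y <= hi -> f1 x <= f1 y.
Proof.
  intros H2 x y Hx Hxy Hy.
  destruct (MVT_cor2 f1 f2 x y Hxy) as [z [Ez Hz]].
  - intros z Hz; apply f_deriv; lra.
  - pose proof (H2 z ltac:(lra)); nra.
Qed.

(* The convexity inequality for x < y and 0 < t < 1: the chord slopes on
   [x, z] and [z, y] are derivative values at points c1 < c2. *)
Lemma convex_ordered :
  (forall r, lo <= r <= hi -> 0 <= f2 r) ->
  forall x y t, lo <= x -> x < y -> y <= hi -> 0 < t < 1 ->
  f (t * x + (1 - t) * y) <= t * f x + (1 - t) * f y.
Proof.
  intros H2 x y t Hx Hxy Hy Ht.
  set (z := t * x + (1 - t) * y).
  assert (Hxz : x < z) by (unfold z; nra).
  assert (Hzy : z < y) by (unfold z; nra).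
  destruct (MVT_cor2 f f1 x z Hxz) as [c1 [E1 C1]];
    [intros r Hr; apply f_deriv; lra|].
  destruct (MVT_cor2 f f1 z y Hzy) as [c2 [E2 C2]];
    [intros r Hr; apply f_deriv; lra|].
  assert (Hmono : f1 c1 <= f1 c2)
    by (apply deriv_nondecreasing; auto; lra).
  replace (z - x) with ((1 - t) * (y - x)) in E1 by (unfold z; ring).
  replace (y - z) with (t * (y - x)) in E2 by (unfold z; ring).
  assert (0 <= t * (1 - t) * (y - x) * (f1 c2 - f1 c1)).
  { repeat apply Rmult_le_pos; nra. }
  nra.
Qed.

Lemma convex_of_d2_nonneg :
  (forall r, lo <= r <= hi -> 0 <= f2 r) -> convex_on f lo hi.
Proof.
  intros H2 x y t Hx Hy Ht.
  destruct (Req_dec t 0) as [->|Ht0].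
  { replace (0 * x + (1 - 0) * y) with y by ring; lra. }
  destruct (Req_dec t 1) as [->|Ht1].
  { replace (1 * x + (1 - 1) * y) with x by ring; lra. }
  destruct (Rtotal_order x y) as [Hxy|[<-|Hxy]].
  - apply convex_ordered; auto; lra.
  - replace (t * x + (1 - t) * x) with x by ring; lra.
  - replace (t * x + (1 - t) * y) with ((1 - t) * y + (1 - (1 - t)) * x)
      by ring.
    pose proof (convex_ordered H2 y x (1 - t) ltac:(lra) Hxy ltac:(lra)
                  ltac:(lra)); lra.
Qed.

End Convexity.

Lemma concave_of_d2_nonpos (f f1 f2 : R -> R) (lo hi : R) :
  (forall r, lo <= r <= hi ->
     derivable_pt_lim f r (f1 r) /\ derivable_pt_lim f1 r (f2 r)) ->
  (forall r, lo <= r <= hi -> f2 r <= 0) -> concave_on f lo hi.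
Proof.
  intros Hd H2 x y t Hx Hy Ht.
  assert (C : convex_on (fun r => - f r) lo hi).
  { apply (convex_of_d2_nonneg _ (fun r => - f1 r) (fun r => - f2 r)).
    - intros r Hr; destruct (Hd r Hr) as [D1 D2]; split;
        now apply derivable_pt_lim_opp.
    - intros r Hr; pose proof (H2 r Hr); lra. }
  pose proof (C x y t Hx Hy Ht); simpl in *; lra.
Qed.

(* Assume the sign of f'' is that of g - Q for a strictly increasing g:
   this is the abstract shape of the theorem's main claim. *)
Section SignPattern.
Variables (f f1 f2 g : R -> R) (Q lo hi : R).
Hypothesis g_incr : forall x y, x < y -> g x < g y.
Hypothesis f2_sign : forall r, lo <= r <= hi -> sgn (f2 r) = sgn (g r - Q).

Lemma increasing_le (x y : R) : x <= y -> g x <= g y.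
Proof. intros [H|<-]; [left; auto|lra]. Qed.

Lemma increasing_lt_reflect (x y : R) : g x < g y -> x < y.
Proof.
  intros H; destruct (Rlt_or_le x y) as [Hxy|Hyx]; auto.
  pose proof (increasing_le y x Hyx); lra.
Qed.

Section WithDerivatives.
Hypothesis f_deriv : forall r, lo <= r <= hi ->
  derivable_pt_lim f r (f1 r) /\ derivable_pt_lim f1 r (f2 r).

Lemma convex_of_sign_pattern : Q <= g lo -> convex_on f lo hi.
Proof.
  intros HQ; apply (convex_of_d2_nonneg f f1 f2); auto.
  intros r Hr; destruct (sgn_eq_iff _ _ (f2_sign r Hr)).
  pose proof (increasing_le lo r (proj1 Hr)); destruct (Rle_or_lt 0 (f2 r)); lra.
Qed.

Lemma concave_of_sign_pattern : g hi <= Q -> concave_on f lo hi.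
Proof.
  intros HQ; apply (concave_of_d2_nonpos f f1 f2); auto.
  intros r Hr; destruct (sgn_eq_iff _ _ (f2_sign r Hr)).
  pose proof (increasing_le r hi (proj2 Hr)); destruct (Rle_or_lt (f2 r) 0); lra.
Qed.

End WithDerivatives.

Lemma inflection_of_sign_pattern (rs : R) :
  lo <= rs <= hi -> g rs = Q ->
  f2 rs = 0 /\ (forall r, lo <= r < rs -> f2 r < 0) /\
  (forall r, rs < r <= hi -> 0 < f2 r).
Proof.
  intros Hrs Hg; split; [|split].
  - destruct (sgn_eq_iff _ _ (f2_sign rs Hrs)) as [Hpos Hneg].
    destruct (Rtotal_order (f2 rs) 0) as [H|[H|H]]; auto; exfalso; lra.
  - intros r Hr; apply (sgn_eq_iff _ _ (f2_sign r ltac:(lra))).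
    pose proof (g_incr r rs (proj2 Hr)); lra.
  - intros r Hr; apply (sgn_eq_iff _ _ (f2_sign r ltac:(lra))).
    pose proof (g_incr rs r (proj1 Hr)); lra.
Qed.

End SignPattern.

Definition r2_of (c d Pmax P2 : R) : R := log2 (1 + c * P2 / (1 + d * Pmax)).

Lemma P2_of_r2_of (c d Pmax P2 : R) :
  0 < c -> 0 < 1 + d * Pmax -> 0 <= P2 ->
  P2_of c d Pmax (r2_of c d Pmax P2) = P2.
Proof.
  intros Hc Hdp HP2; unfold P2_of, r2_of.
  assert (0 <= c * P2 / (1 + d * Pmax)) by (apply Rdiv_le_0_compat; nra).
  rewrite Rpower2_log2 by lra; field; lra.
Qed.

Lemma P2_of_0 (c d Pmax : R) : P2_of c d Pmax 0 = 0.
Proof. unfold P2_of; rewrite Rpower_O by lra; ring. Qed.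

Lemma P2_of_increasing (c d Pmax : R) : 0 < c -> 0 < 1 + d * Pmax ->
  forall x y, x < y -> P2_of c d Pmax x < P2_of c d Pmax y.
Proof.
  intros Hc Hdp x y Hxy; unfold P2_of.
  pose proof (Rpower_lt 2 x y ltac:(lra) Hxy).
  assert (0 < / c * (1 + d * Pmax))
    by (apply Rmult_lt_0_compat; [apply Rinv_0_lt_compat|]; lra).
  nra.
Qed.

Section Frontier.
Variables a b c d Pmax : R.
Hypotheses (ha : 0 < a) (hb : 0 < b) (hc : 0 < c) (hd : 0 < d) (hP : 0 < Pmax).

(* kappa = beta / c; then den r2 = 1 + b P2 is the denominator in h. *)
Definition kappa : R := b / c * (1 + d * Pmax).
Definition den (r : R) : R := 1 + kappa * (Rpower 2 r - 1).

Definition dhPhi1 (r : R) : R :=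
  - (a * Pmax) * kappa * Rpower 2 r / (den r * (den r + a * Pmax)).
Definition d2hPhi1 (r : R) : R :=
  a * Pmax * ln 2 * kappa * Rpower 2 r *
  (den r ^ 2 + 2 * (kappa - 1) * den r + (kappa - 1) * (a * Pmax))
  / (den r * (den r + a * Pmax)) ^ 2.

(* Below r2 = 0 the formula for h stays meaningful down to -margin,
   where 2^r2 = kappa / (1 + kappa) and den is still positive. *)
Definition margin : R := log2 (1 + / kappa).

Lemma kappa_pos : 0 < kappa.
Proof. unfold kappa; apply Rmult_lt_0_compat; [apply Rdiv_lt_0_compat|]; nra. Qed.

Lemma margin_pos : 0 < margin.
Proof.
  pose proof ln2_pos; pose proof (Rinv_0_lt_compat _ kappa_pos).
  unfold margin, log2; apply Rdiv_lt_0_compat; auto.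
  rewrite <- ln_1; apply ln_increasing; lra.
Qed.

Lemma den_pos (r : R) : - margin < r -> 0 < den r.
Proof.
  intros Hr; pose proof kappa_pos as Hk.
  pose proof (Rinv_0_lt_compat _ Hk) as Hk'.
  assert (Hlow : / (1 + / kappa) < Rpower 2 r).
  { replace (/ (1 + / kappa)) with (Rpower 2 (- margin)).
    - apply Rpower_lt; lra.
    - rewrite Rpower_Ropp; unfold margin; rewrite Rpower2_log2; lra. }
  assert (1 - kappa + kappa * / (1 + / kappa) = / (kappa + 1)) by (field; lra).
  pose proof (Rinv_0_lt_compat (kappa + 1) ltac:(lra)).
  unfold den; nra.
Qed.

Lemma hPhi1_derivatives (r : R) : - margin < r ->
  derivable_pt_lim (hPhi1 a b c d Pmax) r (dhPhi1 r) /\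
  derivable_pt_lim dhPhi1 r (d2hPhi1 r).
Proof.
  intros Hr; pose proof (den_pos r Hr) as Hden.
  pose proof (exp_pos (r * ln 2)) as HE; pose proof ln2_pos.
  assert (HaP : 0 < a * Pmax) by nra.
  unfold den, Rpower in Hden; split; apply is_derive_Reals;
    unfold hPhi1, dhPhi1, d2hPhi1, den, log2, Rpower; fold kappa.
  - auto_derive.
    + assert (0 < a * Pmax / (1 + kappa * (exp (r * ln 2) - 1)))
        by (apply Rdiv_lt_0_compat; nra).
      unfold Rdiv, Rminus in *; repeat split; lra.
    + field; repeat split; nra.
  - auto_derive.
    + apply Rgt_not_eq; apply Rmult_lt_0_compat; nra.
    + field; split; nra.
Qed.

Lemma dhPhi1_neg (r : R) : - margin < r -> dhPhi1 r < 0.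
Proof.
  intros Hr; pose proof (den_pos r Hr); pose proof kappa_pos.
  pose proof (exp_pos (r * ln 2)); assert (0 < a * Pmax) by nra.
  unfold dhPhi1, Rpower, Rdiv; rewrite !Ropp_mult_distr_l_reverse.
  apply Ropp_lt_gt_0_contravar, Rmult_lt_0_compat;
    repeat apply Rmult_lt_0_compat; try apply Rinv_0_lt_compat; nra.
Qed.

(* Completing the square: h'' is a positive multiple of (beta E)^2 - D. *)
Lemma d2hPhi1_factor (r : R) : - margin < r ->
  let beta := beta_of b d Pmax in
  d2hPhi1 r =
    a * Pmax * ln 2 * kappa * Rpower 2 r
      / (c ^ 2 * (den r * (den r + a * Pmax)) ^ 2)
    * ((beta * Rpower 2 r) ^ 2 - (c - beta) * (c - beta + a * c * Pmax)).
Proof.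
  intros Hr beta; pose proof (den_pos r Hr) as Hden.
  assert (0 < a * Pmax) by nra.
  assert (Hcden : 0 < c + b * (1 + d * Pmax) * (Rpower 2 r - 1)).
  { replace (c + b * (1 + d * Pmax) * (Rpower 2 r - 1)) with (c * den r)
      by (unfold den, kappa; field; lra); nra. }
  unfold d2hPhi1, beta, beta_of; unfold den in *; unfold kappa in *.
  field; repeat split; nra.
Qed.

Lemma sgn_d2hPhi1 (r : R) : - margin < r ->
  sgn (d2hPhi1 r) = sgn (P2_of c d Pmax r - Q2_of a b c d Pmax).
Proof.
  intros Hr; pose proof (den_pos r Hr); pose proof kappa_pos; pose proof ln2_pos.
  assert (HE : 0 < Rpower 2 r) by apply exp_pos.
  assert (0 < a * Pmax) by nra.
  assert (Hbeta : 0 < beta_of b d Pmax)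
    by (unfold beta_of; apply Rmult_lt_0_compat; nra).
  assert (Hdiff : P2_of c d Pmax r - Q2_of a b c d Pmax =
    / (c * b) * (beta_of b d Pmax * Rpower 2 r
       - re_sqrt ((c - beta_of b d Pmax)
                  * (c - beta_of b d Pmax + a * c * Pmax)))).
  { unfold P2_of, Q2_of, beta_of; field; lra. }
  rewrite d2hPhi1_factor, Hdiff by exact Hr.
  rewrite !sgn_mul_pos.
  - apply sgn_sq_sub_re_sqrt; nra.
  - apply Rinv_0_lt_compat; nra.
  - apply Rdiv_lt_0_compat.
    + apply Rmult_lt_0_compat; [apply Rmult_lt_0_compat|]; [nra|lra|lra].
    + apply Rmult_lt_0_compat; [nra|apply pow_lt; nra].
Qed.

End Frontier.

Theorem mainTheorem7 (a b c d Pmax : R)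
  (ha : 0 < a) (hb : 0 < b) (hc : 0 < c) (hd : 0 < d) (hP : 0 < Pmax) :
  let h := hPhi1 a b c d Pmax in
  let Q2 := Q2_of a b c d Pmax in
  exists (h1 h2 : R -> R) (eps : R), 0 < eps /\
    (* h1, h2 are the first and second derivatives of h on a neighbourhood of r2 >= 0 *)
    (forall r, - eps < r -> derivable_pt_lim h r (h1 r) /\ derivable_pt_lim h1 r (h2 r)) /\
    (* main claim *)
    (forall r2, 0 <= r2 -> sgn (h2 r2) = sgn (P2_of c d Pmax r2 - Q2)) /\
    (* consequences on the part of Phi_1 with P2 in [0, Pmax], i.e. r2 in [0, r2max] *)
    (Q2 <= 0 -> convex_on h 0 (r2max c d Pmax)) /\
    (Pmax <= Q2 -> concave_on h 0 (r2max c d Pmax)) /\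
    (0 < Q2 < Pmax ->
       exists rs, 0 < rs < r2max c d Pmax /\ P2_of c d Pmax rs = Q2 /\
         h1 rs <> 0 /\ h2 rs = 0 /\
         (forall r, 0 <= r < rs -> h2 r < 0) /\
         (forall r, rs < r <= r2max c d Pmax -> 0 < h2 r)).
Proof.
  cbv zeta.
  pose proof (margin_pos b c d Pmax hb hc hd hP) as Hm.
  assert (Hdp : 0 < 1 + d * Pmax) by nra.
  pose proof (P2_of_increasing c d Pmax hc Hdp) as P2_incr.
  assert (P2_end : P2_of c d Pmax (r2max c d Pmax) = Pmax)
    by (apply P2_of_r2_of; lra).
  assert (Hderiv : forall r, 0 <= r <= r2max c d Pmax ->
    derivable_pt_lim (hPhi1 a b c d Pmax) r (dhPhi1 a b c d Pmax r) /\
    derivable_pt_lim (dhPhi1 a b c d Pmax) r (d2hPhi1 a b c d Pmax r))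
    by (intros r Hr; apply hPhi1_derivatives; auto; lra).
  assert (Hsign : forall r, 0 <= r <= r2max c d Pmax ->
    sgn (d2hPhi1 a b c d Pmax r) = sgn (P2_of c d Pmax r - Q2_of a b c d Pmax))
    by (intros r Hr; apply sgn_d2hPhi1; auto; lra).
  exists (dhPhi1 a b c d Pmax), (d2hPhi1 a b c d Pmax), (margin b c d Pmax).
  split; [exact Hm|]; split; [|split; [|split; [|split]]].
  - intros r Hr; now apply hPhi1_derivatives.
  - intros r Hr; apply sgn_d2hPhi1; auto; lra.
  - intros HQ; apply (convex_of_sign_pattern _ _ _ _ _ _ _ P2_incr Hsign Hderiv).
    now rewrite P2_of_0.
  - intros HQ; apply (concave_of_sign_pattern _ _ _ _ _ _ _ P2_incr Hsign Hderiv).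
    now rewrite P2_end.
  - intros [HQ0 HQP]; set (rs := r2_of c d Pmax (Q2_of a b c d Pmax)).
    assert (P2_rs : P2_of c d Pmax rs = Q2_of a b c d Pmax)
      by (apply P2_of_r2_of; lra).
    assert (0 < rs).
    { apply (increasing_lt_reflect _ P2_incr); rewrite P2_rs, P2_of_0; lra. }
    assert (rs < r2max c d Pmax).
    { apply (increasing_lt_reflect _ P2_incr); rewrite P2_rs, P2_end; lra. }
    destruct (inflection_of_sign_pattern _ _ _ _ _ P2_incr Hsign rs
                ltac:(lra) P2_rs) as [Hzero [Hbefore Hafter]].
    exists rs.
    repeat split; auto; try lra.
    apply Rlt_not_eq, dhPhi1_neg; auto; lra.
Qed.
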